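(* Let $\Phi(\xi;t_5,t_2,x)=\big[\mathbb I+\sum_{k\ge1}\Phi_k\xi^{-k}\big]e^{\Theta(\xi;t_5,t_2,x)}$ be a formal solution at $\xi=\infty$ of $\partial_\xi\Phi=\mathcal L(\xi;t_5,t_2,x)\Phi$. Then $\Phi(\xi;t_5,t_2,x)=\mathcal S^T\Phi(\omega\xi;t_5,t_2,x)\mathcal S$, and the coefficients satisfy $\Phi_k=\omega^{-k}\mathcal S^T\Phi_k\mathcal S$ for all $k$.
   Context: $\omega=e^{2\pi i/3}$, $\mathcal S=\begin{pmatrix}0&1&0\\0&0&1\\1&0&0\end{pmatrix}$. $\Theta=\mathrm{diag}(\vartheta_1,\vartheta_2,\vartheta_3)$ with $\vartheta_j(\xi)=\frac37\omega^{j-1}\xi^7+\omega^{1-j}t_5\xi^5+\omega^{1-j}t_2\xi^2+\omega^{j-1}x\xi$. $\mathcal L(\xi):=3\xi^2g(\xi)^{-1}L(\xi^3)g(\xi)-g(\xi)^{-1}g'(\xi)$ with $g(\xi)=\frac i{\sqrt3}\mathrm{diag}(\xi,1,\xi^{-1})\begin{pmatrix}1&\omega&\omega^2\\1&1&1\\1&\omega^2&\omega\end{pmatrix}$ and $L(\lambda)=E_{13}\lambda^2+\begin{pmatrix}0&2t_5+\frac14Q_U&-Q_V\\1&0&2t_5+\frac14Q_U\\0&1&0\end{pmatrix}\lambda+L_0$ ($E_{ij}$ matrix units, $Q_a,P_a$ parameters), $L_0$ with rows $(\tfrac18Q_U^2-P_W+\tfrac12P_V-\tfrac14t_5Q_U-\tfrac16t_5^2,L_{12},L_{13})$,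 $(\tfrac12Q_V-\tfrac14Q_W,2P_W-\tfrac14Q_U^2+\tfrac12t_5Q_U+\tfrac13t_5^2,L_{23})$, $(t_5-\tfrac12Q_U,\tfrac12Q_V+\tfrac14Q_W,\tfrac18Q_U^2-P_W-\tfrac12P_V-\tfrac14t_5Q_U-\tfrac16t_5^2)$, $L_{12}=\tfrac5{16}Q_UQ_W-P_U+\tfrac14t_5Q_W-\tfrac38Q_UQ_V-\tfrac12t_5Q_V+t_2$, $L_{13}=\tfrac1{16}Q_W^2+\tfrac7{32}Q_U^3+\tfrac34Q_V^2-\tfrac32P_WQ_U+\tfrac5{16}t_5Q_U^2-2t_5P_W+\tfrac14t_5^2Q_U+x+\tfrac8{27}t_5^3$, $L_{23}=-\tfrac5{16}Q_UQ_W+P_U-\tfrac14t_5Q_W-\tfrac38Q_UQ_V-\tfrac12t_5Q_V+t_2$. *)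

From HB Require Import structures.
From mathcomp Require Import all_boot all_order all_algebra.
Set Implicit Arguments. Unset Strict Implicit. Unset Printing Implicit Defensive.
Import Order.TTheory GRing.Theory Num.Theory.
Local Open Scope ring_scope.

Section Defs.
Variable C : numClosedFieldType.

(* omega = e^{2 pi i/3} = (-1 + i sqrt 3)/2 *)
Definition omega : C := (-1 + 'i * sqrtC 3) / 2.

Definition mx3 {T : nmodType} (a b c d e f g h k : T) : 'M[T]_3 :=
  \matrix_(i < 3, j < 3)
     nth 0 (nth [::] [:: [:: a; b; c]; [:: d; e; f]; [:: g; h; k]] i) j.

Definition Smx : 'M[C]_3 := mx3 0 1 0  0 0 1  1 0 0.

(* the constant matrix of g(xi) = i/sqrt3 diag(xi,1,xi^-1) V *)
Definition Vmx : 'M[C]_3 :=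
  mx3 1 omega (omega ^+ 2)  1 1 1  1 (omega ^+ 2) omega.

Variables (t5 t2 x QU QV QW PU PV PW : C).

(* L(lambda) = E13 lambda^2 + L1 lambda + L0 *)
Definition E13 : 'M[C]_3 := mx3 0 0 1  0 0 0  0 0 0.
Definition L1 : 'M[C]_3 :=
  mx3 0 (2 * t5 + 4^-1 * QU) (- QV)
      1 0 (2 * t5 + 4^-1 * QU)
      0 1 0.
Definition L12 : C :=
  5/16 * QU * QW - PU + 4^-1 * t5 * QW - 3/8 * QU * QV - 2^-1 * t5 * QV + t2.
Definition L13 : C :=
  1/16 * QW ^+ 2 + 7/32 * QU ^+ 3 + 3/4 * QV ^+ 2 - 3/2 * PW * QU
  + 5/16 * t5 * QU ^+ 2 - 2 * t5 * PW + 4^-1 * t5 ^+ 2 * QU + x + 8/27 * t5 ^+ 3.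
Definition L23 : C :=
  - (5/16) * QU * QW + PU - 4^-1 * t5 * QW - 3/8 * QU * QV - 2^-1 * t5 * QV + t2.
Definition L0 : 'M[C]_3 :=
  mx3 (8^-1 * QU ^+ 2 - PW + 2^-1 * PV - 4^-1 * t5 * QU - 6^-1 * t5 ^+ 2) L12 L13
      (2^-1 * QV - 4^-1 * QW) (2 * PW - 4^-1 * QU ^+ 2 + 2^-1 * t5 * QU + 3^-1 * t5 ^+ 2) L23
      (t5 - 2^-1 * QU) (2^-1 * QV + 4^-1 * QW)
        (8^-1 * QU ^+ 2 - PW - 2^-1 * PV - 4^-1 * t5 * QU - 6^-1 * t5 ^+ 2).

Definition cmx (A : 'M[C]_3) : 'M[{poly C}]_3 := map_mx polyC A.

Definition Lxi3 : 'M[{poly C}]_3 :=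
  'X^6 *: cmx E13 + 'X^3 *: cmx L1 + cmx L0.

(* xi * diag(xi^-1,1,xi) = diag(1,xi,xi^2),  xi * diag(xi,1,xi^-1) = diag(xi^2,xi,1) *)
Definition Bmx : 'M[{poly C}]_3 := diag_mx (\row_(i < 3) 'X^i).
Definition Cmx : 'M[{poly C}]_3 := diag_mx (\row_(i < 3) 'X^(2 - i)).
Definition Emx : 'M[C]_3 := diag_mx (\row_(i < 3) (1 - i%:R)).

(* curly L(xi) = Lpol(xi) + xi^{-1} Lres, where
   3 xi^2 g^-1 L(xi^3) g = 3 V^-1 Bmx L(xi^3) Cmx V   and
   g^-1 g' = xi^-1 V^-1 diag(1,0,-1) V.                                 *)
Definition Lpol : 'M[{poly C}]_3 :=
  3%:R *: (cmx (invmx Vmx) *m Bmx *m Lxi3 *m Cmx *m cmx Vmx).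
Definition Lres : 'M[C]_3 := - (invmx Vmx *m Emx *m Vmx).

(* vartheta_j, j = i+1 *)
Definition theta (i : 'I_3) : {poly C} :=
  (3/7 * omega ^+ i) *: 'X^7 + (omega ^- i * t5) *: 'X^5
  + (omega ^- i * t2) *: 'X^2 + (omega ^+ i * x) *: 'X.
Definition Theta : 'M[{poly C}]_3 := diag_mx (\row_i theta i).
Definition dTheta : 'M[{poly C}]_3 := map_mx (fun p => p^`()) Theta.

Definition mx_eval (A : 'M[{poly C}]_3) (xi : C) : 'M[C]_3 := map_mx (fun p => p.[xi]) A.

Definition mcoef (A : 'M[{poly C}]_3) (m : nat) : 'M[C]_3 := map_mx (fun p : {poly C} => nth 0 (polyseq p) m) A.
Definition msize (A : 'M[{poly C}]_3) : nat := (\max_(i : 'I_3) \max_(j : 'I_3) size (A i j))%N.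

(* coefficient of xi^{-k} of Y = sum_k Phi_k xi^{-k}, k integer (0 for k<0) *)
Definition coefZ (Phi : nat -> 'M[C]_3) (k : int) : 'M[C]_3 :=
  match k with Posz n => Phi n | Negz _ => 0 end.

(* Phi = [I + sum_{k>=1} Phi_k xi^{-k}] e^{Theta} is a formal solution of
   dPhi/dxi = curly-L Phi, i.e. Y = I + sum Phi_k xi^{-k} satisfies
   Y' + Y Theta' = curly-L Y as formal Laurent series in xi^{-1}:
   comparing coefficients of xi^p for every integer p.                  *)
Definition formal_solution (Phi : nat -> 'M[C]_3) : Prop :=
  Phi 0%N = 1%:M /\
  forall p : int,
    (p + 1)%:~R *: coefZ Phi (- p - 1)
    + \sum_(m < msize dTheta) (coefZ Phi (m%:Z - p) *m mcoef dTheta m)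
    = \sum_(m < msize Lpol) (mcoef Lpol m *m coefZ Phi (m%:Z - p))
      + Lres *m coefZ Phi (- 1 - p).

End Defs.

(* Both ingredients of the equation are invariant under xi |-> omega xi followed
   by conjugation with S: the coefficient of xi^m in Theta' or in curly L is an
   eigenvector of A |-> S^T A S with eigenvalue omega^-(m+1).  For Theta this is
   the identity theta_j(xi) = theta_1(omega^(j-1) xi); for curly L it follows
   from V S = omega^2 diag(1, omega, omega^2) V, where V is the constant part of
   g, together with the fact that L(xi^3) only involves powers of xi^3.
   Consequently S^T Phi(omega xi) S is again a formal solution, and its series
   part has coefficients omega^-k S^T Phi_k S.  Normalised formal solutions are
   unique: if Y1, Y2 are two of them, W = Y1^-1 (Y2 - Y1) satisfies
   W' = Theta' W - W Theta'.  The diagonal of this commutator vanishes, which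
   kills the diagonal of W, and the leading coefficient 3 diag(1, omega, omega^2)
   of Theta' has distinct entries, which kills the rest. *)

From Pilot Require Import Defs.
From HB Require Import structures.
From mathcomp Require Import all_boot all_order all_algebra.
From mathcomp Require Import ring zify.
From Stdlib Require Import FunctionalExtensionality.
Set Implicit Arguments. Unset Strict Implicit. Unset Printing Implicit Defensive.
Import Order.TTheory GRing.Theory Num.Theory.
Local Open Scope ring_scope.

Local Notation "a \+ b" := (GRing.add_fun a b) : function_scope.
Local Notation "a \- b" := (GRing.sub_fun a b) : function_scope.

Section PowerSeries.
Variable R : nzRingType.
Implicit Types a b c : nat -> R.

Definition conv a b n := \sum_(i < n.+1) a i * b (n - i)%N.
Definition xpow (k n : nat) : R := (n == k)%:R.
Definition euler a n := a n *+ n.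
Definition euler_shift k a := conv (xpow k) (euler a).

(* Series are in z = xi^-1, [Y n] being the coefficient of xi^-n.  Since
   xi^K d/dxi = - z^(K+1) (z d/dz), the equation Y' + Y A = B Y for Laurent
   polynomials A, B of degree at most K in xi, multiplied by xi^K, reads
   [is_sol K T L Y] where T, L are the coefficients of z^K A, z^K B. *)
Definition is_sol K (T L Y : nat -> R) := euler_shift K.+1 Y = conv Y T \- conv L Y.
Definition rev_at K (G : nat -> R) q := if (q <= K)%N then G (K - q)%N else 0.
Definition cons_series (c : R) (G : nat -> R) m := if m is m'.+1 then G m' else c.

Lemma conv_rev a b n : conv a b n = \sum_(i < n.+1) a (n - i)%N * b i.
Proof.
rewrite /conv (reindex_inj rev_ord_inj) /=; apply: eq_bigr => i _.
by rewrite subSS subKn // -ltnS.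
Qed.

Lemma convA a b c : conv (conv a b) c = conv a (conv b c).
Proof.
apply: functional_extensionality => n; symmetry.
rewrite [RHS]conv_rev {1}/conv.
pose t i j := a i * (b (n - i - j)%N * c j).
transitivity (\sum_(i < n.+1) \sum_(j < n.+1 | (j <= n - i)%N) t i j).
  apply: eq_bigr => /= i _; rewrite conv_rev mulr_sumr.
  by rewrite (big_ord_narrow_leq (leq_subr _ _)).
rewrite (exchange_big_dep predT) //=; apply: eq_bigr => j _.
transitivity (\sum_(i < n.+1 | (i <= n - j)%N) t i j).
  apply: eq_bigl => i; rewrite -ltnS -(ltnS i) -!subSn ?leq_ord //.
  by rewrite -subn_gt0 -(subn_gt0 i) -!subnDA addnC.
rewrite (big_ord_narrow_leq (leq_subr _ _)) /conv mulr_suml.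
by apply: eq_bigr => i _; rewrite /t -!subnDA addnC mulrA.
Qed.

Lemma conv_addr a b c : conv a (b \+ c) = conv a b \+ conv a c.
Proof.
apply: functional_extensionality => n; rewrite /conv /GRing.add_fun -big_split /=.
by apply: eq_bigr => i _; rewrite mulrDr.
Qed.

Lemma conv_subl a b c : conv (a \- b) c = conv a c \- conv b c.
Proof.
apply: functional_extensionality => n; rewrite /conv /GRing.sub_fun -sumrB.
by apply: eq_bigr => i _; rewrite mulrBl.
Qed.

Lemma conv_subr a b c : conv a (b \- c) = conv a b \- conv a c.
Proof.
apply: functional_extensionality => n; rewrite /conv /GRing.sub_fun -sumrB.
by apply: eq_bigr => i _; rewrite mulrBr.
Qed.

Lemma conv_xpowl k a n : conv (xpow k) a n = if (k <= n)%N then a (n - k)%N else 0.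
Proof.
rewrite /conv (eq_bigr (fun i : 'I_n.+1 => if i == k :> nat then a (n - i)%N else 0)).
  by rewrite -big_mkcond (big_ord1_eq _ (fun i => a (n - i)%N)) ltnS.
by move=> i _; rewrite /xpow; case: eqP; rewrite ?mul1r ?mul0r.
Qed.

Lemma conv_xpowr k a n : conv a (xpow k) n = if (k <= n)%N then a (n - k)%N else 0.
Proof.
rewrite conv_rev (eq_bigr (fun i : 'I_n.+1 => if i == k :> nat then a (n - i)%N else 0)).
  by rewrite -big_mkcond (big_ord1_eq _ (fun i => a (n - i)%N)) ltnS.
by move=> i _; rewrite /xpow; case: eqP; rewrite ?mulr1 ?mulr0.
Qed.

Lemma conv_xpowC k a : conv (xpow k) a = conv a (xpow k).
Proof. by apply: functional_extensionality => n; rewrite conv_xpowl conv_xpowr. Qed.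

Lemma conv1l a : conv (xpow 0) a = a.
Proof. by apply: functional_extensionality => n; rewrite conv_xpowl subn0. Qed.

Lemma conv1r a : conv a (xpow 0) = a.
Proof. by apply: functional_extensionality => n; rewrite conv_xpowr subn0. Qed.

Lemma euler_conv a b : euler (conv a b) = conv (euler a) b \+ conv a (euler b).
Proof.
apply: functional_extensionality => n; rewrite /euler /conv /GRing.add_fun -big_split /=.
rewrite -sumrMnl; apply: eq_bigr => i _.
by rewrite mulrnAl mulrnAr -mulrnDr subnKC // -ltnS.
Qed.

Lemma euler_shift_conv k a b :
  euler_shift k (conv a b) = conv (euler_shift k a) b \+ conv a (euler_shift k b).
Proof.
by rewrite /euler_shift euler_conv conv_addr -!convA [conv (xpow k) a]conv_xpowC.
Qed.

Lemma euler_shift_sub k a b : euler_shift k (a \- b) = euler_shift k a \- euler_shift k b.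
Proof.
rewrite /euler_shift -conv_subr; congr conv.
by apply: functional_extensionality => n; rewrite /euler /GRing.sub_fun mulrnBl.
Qed.

Lemma euler_shiftE k a n :
  euler_shift k a n = if (k <= n)%N then a (n - k)%N *+ (n - k) else 0.
Proof. by rewrite /euler_shift conv_xpowl. Qed.

Lemma euler_shift1 k : euler_shift k (xpow 0) = fun=> 0.
Proof.
apply: functional_extensionality => n; rewrite euler_shiftE /xpow.
by case: ifP => // _; case: eqP => [->|_]; rewrite ?mulr0n ?mul0rn.
Qed.

Lemma conv_lead a b p q : (forall i, (i < p)%N -> a i = 0) -> (forall j, (j < q)%N -> b j = 0) ->
  conv a b (p + q)%N = a p * b q.
Proof.
move=> a0 b0; have lt_p : (p < (p + q).+1)%N by rewrite ltnS leq_addr.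
rewrite /conv (bigD1 (Ordinal lt_p)) //= addKn big1 ?addr0 // => i /eqP ne_ip.
case: (ltngtP i p) => [lt_ip|gt_ip|eq_ip]; first by rewrite a0 ?mul0r.
  by rewrite b0 ?mulr0 //; have := ltn_ord i; lia.
by case: ne_ip; apply: val_inj.
Qed.

Lemma conv_eq0l a b : a 0 = 1 -> (forall n, conv a b n = 0) -> forall n, b n = 0.
Proof.
move=> a0 ab0; elim/ltn_ind => n IH.
by rewrite -[b n]mul1r -a0 -(@conv_lead a b 0 n) ?ab0.
Qed.

Lemma conv_eq0r a b : b 0 = 1 -> (forall n, conv a b n = 0) -> forall n, a n = 0.
Proof.
move=> b0 ab0; elim/ltn_ind => n IH.
by rewrite -[a n]mulr1 -b0 -(@conv_lead a b n 0) ?addn0 ?ab0.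
Qed.

Fixpoint linv_seq a n : seq R :=
  if n is m.+1 then
    let s := linv_seq a m in rcons s (- \sum_(i < m.+1) s`_i * a (m.+1 - i)%N)
  else [:: 1].
Definition linv a n := (linv_seq a n)`_n.

Lemma size_linv_seq a n : size (linv_seq a n) = n.+1.
Proof. by elim: n => //= n IH; rewrite size_rcons IH. Qed.

Lemma nth_linv_seq a n i : (i <= n)%N -> (linv_seq a n)`_i = linv a i.
Proof.
elim: n => [|n IH]; first by rewrite leqn0 => /eqP ->.
rewrite leq_eqVlt => /predU1P [-> //|lt_in].
by rewrite /= nth_rcons size_linv_seq lt_in IH.
Qed.

Lemma linvS a n : linv a n.+1 = - \sum_(i < n.+1) linv a i * a (n.+1 - i)%N.
Proof.
rewrite {1}/linv /= nth_rcons size_linv_seq ltnn eqxx; congr (- _).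
by apply: eq_bigr => i _; rewrite nth_linv_seq // -ltnS.
Qed.

Lemma conv_linv a : a 0 = 1 -> conv (linv a) a = xpow 0.
Proof.
move=> a0; apply: functional_extensionality => -[|n].
  by rewrite /conv big_ord1 a0 mulr1.
by rewrite /conv big_ord_recr /= subnn a0 mulr1 linvS addrN.
Qed.

Section Solutions.
Variables (K : nat) (T L : nat -> R).

Lemma is_sol_sub Y1 Y2 : is_sol K T L Y1 -> is_sol K T L Y2 -> is_sol K T L (Y2 \- Y1).
Proof.
rewrite /is_sol euler_shift_sub => -> ->; rewrite conv_subl conv_subr.
apply: functional_extensionality => n; rewrite /GRing.sub_fun.
rewrite [in LHS]opprB [in LHS]addrACA [in RHS]opprB [in RHS]addrACA.
by rewrite [- conv L Y2 n - _]addrC.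
Qed.

Lemma is_sol_linv Y : Y 0 = 1 -> is_sol K T L Y ->
  euler_shift K.+1 (linv Y) = conv (linv Y) L \- conv T (linv Y).
Proof.
move=> Y0 sY; have PY := conv_linv Y0; apply: functional_extensionality.
move=> n; apply/eqP; rewrite -subr_eq0; apply/eqP; move: n.
apply: (conv_eq0r Y0) => n; rewrite conv_subl conv_subl.
have := congr1 (fun Z => Z n) (euler_shift_conv K.+1 (linv Y) Y).
rewrite PY euler_shift1 sY conv_subr -!convA PY conv1l.
rewrite [conv (conv T _) Y]convA PY conv1r /GRing.add_fun /GRing.sub_fun => /eqP.
by rewrite eq_sym addr_eq0 => /eqP ->; rewrite opprB subrr.
Qed.

Lemma is_sol_gauge Y D : Y 0 = 1 -> is_sol K T L Y -> is_sol K T L D ->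
  euler_shift K.+1 (conv (linv Y) D) = conv (conv (linv Y) D) T \- conv T (conv (linv Y) D).
Proof.
move=> Y0 sY sD; rewrite euler_shift_conv (is_sol_linv Y0 sY) sD.
rewrite conv_subl conv_subr !convA; apply: functional_extensionality => n.
by rewrite /GRing.add_fun /GRing.sub_fun [LHS]addrC addrA subrK.
Qed.

End Solutions.

End PowerSeries.

Arguments xpow {R} k n.

Lemma mul_mx_is_diag (R : nzRingType) n (A D : 'M[R]_n.+1) i j :
  is_diag_mx D -> (A * D) i j = A i j * D j j.
Proof. by case/diag_mxP => d ->; rewrite [_ * _]mul_mx_diag !mxE eqxx mulr1n. Qed.

Lemma mul_is_diag_mx (R : nzRingType) n (D A : 'M[R]_n.+1) i j :
  is_diag_mx D -> (D * A) i j = D i i * A i j.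
Proof. by case/diag_mxP => d ->; rewrite [_ * _]mul_diag_mx !mxE eqxx mulr1n. Qed.

Section Uniqueness.
Variables (F : numDomainType) (p K J : nat) (T L : nat -> 'M[F]_p.+1).
Hypotheses (le_JK : (J <= K)%N) (T_diag : forall q, is_diag_mx (T q))
  (T_lt : forall q, (q < J)%N -> T q = 0)
  (T_lead : forall i j, i != j -> T J i i != T J j j).
Implicit Types W Y : nat -> 'M[F]_p.+1.

Lemma conv_diag_comm W n i : conv W T n i i = conv T W n i i.
Proof.
rewrite [conv T W n]conv_rev /conv !summxE; apply: eq_bigr => a _.
by rewrite mul_mx_is_diag ?mul_is_diag_mx // mulrC.
Qed.

Lemma comm_sol_eq0 W : W 0 = 0 -> euler_shift K.+1 W = conv W T \- conv T W ->
  forall n, W n = 0.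
Proof.
move=> W0 eW; elim/ltn_ind => -[_|k IH]; first exact: W0.
apply/matrixP => i j; rewrite mxE.
have [<-|ne_ij] := eqVneq i j.
  have /eqP := congr1 (fun Y => Y (k.+1 + K.+1)%N i i) eW.
  rewrite /GRing.sub_fun euler_shiftE leq_addl addnK !mxE conv_diag_comm addrN.
  by rewrite mulmxnE mulrn_eq0 => /eqP.
have eS0 : euler_shift K.+1 W (k.+1 + J) = 0.
  by rewrite euler_shiftE; case: ifP => // ?; rewrite IH ?mul0rn //; lia.
have := congr1 (fun Y => Y (k.+1 + J)%N) eW.
rewrite eS0 /GRing.sub_fun (conv_lead IH T_lt) addnC (conv_lead T_lt IH).
move=> /(congr1 (fun A : 'M_p.+1 => A i j)).
rewrite [(_ - _ : 'M_p.+1) i j]mxE [(- _ : 'M_p.+1) i j]mxE.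
rewrite mul_mx_is_diag // mul_is_diag_mx // mxE [W _ i j * _]mulrC -mulrBl => /esym/eqP.
by rewrite mulf_eq0 subr_eq0 eq_sym (negbTE (T_lead ne_ij)) => /eqP.
Qed.

Lemma sol_unique Y1 Y2 : is_sol K T L Y1 -> is_sol K T L Y2 -> Y1 0 = 1 -> Y2 0 = 1 ->
  Y1 = Y2.
Proof.
move=> s1 s2 Y10 Y20; set W := conv (linv Y1) (Y2 \- Y1).
have W0 : W 0 = 0 by rewrite /W /conv big_ord1 /GRing.sub_fun Y10 Y20 subrr mulr0.
have := comm_sol_eq0 W0 (is_sol_gauge Y10 s1 (is_sol_sub s1 s2)).
move/(conv_eq0l (erefl : linv Y1 0 = 1)) => D0.
apply: functional_extensionality => n.
by apply/eqP; rewrite eq_sym -subr_eq0; apply/eqP; exact: D0.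
Qed.

End Uniqueness.

Section AlgebraSeries.
Variables (F : comNzRingType) (A : algType F).
Implicit Types a b : nat -> A.

Lemma conv_scalel c a b : conv (fun n => c *: a n) b = fun n => c *: conv a b n.
Proof.
apply: functional_extensionality => n; rewrite /conv scaler_sumr.
by apply: eq_bigr => i _; rewrite scalerAl.
Qed.

Lemma conv_scaler c a b : conv a (fun n => c *: b n) = fun n => c *: conv a b n.
Proof.
apply: functional_extensionality => n; rewrite /conv scaler_sumr.
by apply: eq_bigr => i _; rewrite scalerAr.
Qed.

End AlgebraSeries.

Section Twist.
Variables (F : fieldType) (p : nat) (S : 'M[F]_p.+1) (u : F).
Hypotheses (S_orth : S *m S^T = 1%:M) (u_neq0 : u != 0).
Implicit Types a b T L Y : nat -> 'M[F]_p.+1.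

(* The coefficients of S^T a(u xi) S. *)
Definition twist a k := u ^- k *: (S^T *m a k *m S).

Lemma twist_conv a b : twist (conv a b) = conv (twist a) (twist b).
Proof.
have SS : S * S^T = 1 := S_orth.
apply: functional_extensionality => n; rewrite /twist /conv !mulmxE.
rewrite mulr_sumr mulr_suml scaler_sumr; apply: eq_bigr => i _.
rewrite -scalerAl -scalerAr scalerA -invfM -exprD subnKC ?leq_ord //; congr (_ *: _).
by rewrite !mulrA -(mulrA _ S) SS mulr1.
Qed.

Lemma twist_sub a b : twist (a \- b) = twist a \- twist b.
Proof.
apply: functional_extensionality => n.
by rewrite /twist /GRing.sub_fun mulmxBr mulmxBl scalerBr.
Qed.

Lemma twist_euler_shift k a :
  twist (euler_shift k a) = fun n => u ^- k *: euler_shift k (twist a) n.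
Proof.
apply: functional_extensionality => n; rewrite /twist !euler_shiftE.
case: ifP => le_kn; last by rewrite mulmx0 mul0mx !scaler0.
by rewrite !mulmxE mulrnAr mulrnAl scalerMnr scalerA -invfM -exprD subnKC.
Qed.

Lemma twist_rev_at K G : (forall m, u ^+ m *: (S^T *m G m *m S) = G m) ->
  forall q, twist (rev_at K G) q = u ^- K *: rev_at K G q.
Proof.
move=> eG q; rewrite /twist /rev_at; case: ifP => le_qK; last first.
  by rewrite mulmx0 mul0mx !scaler0.
rewrite -[in RHS]eG scalerA -{2}(subnKC le_qK).
by rewrite exprD invfM -mulrA mulVf ?mulr1 // expf_neq0.
Qed.

Lemma cons_series_sym c G : S^T *m c *m S = c ->
    (forall m, u ^+ m.+1 *: (S^T *m G m *m S) = G m) ->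
  forall m, u ^+ m *: (S^T *m cons_series c G m *m S) = cons_series c G m.
Proof. by move=> ec eG [|m] /=; rewrite ?expr0 ?scale1r. Qed.

Lemma twist_sol K T L Y :
    (forall q, twist T q = u ^- K.+1 *: T q) -> (forall q, twist L q = u ^- K.+1 *: L q) ->
  is_sol K T L Y -> is_sol K T L (twist Y).
Proof.
move=> tT tL sY; apply: functional_extensionality => n.
have uK : u ^- K.+1 != 0 by rewrite invr_eq0 expf_neq0.
apply: (can_inj (scalerK uK)).
have := congr1 (fun Y => twist Y n) sY; rewrite twist_euler_shift => ->.
rewrite twist_sub twist_conv twist_conv (functional_extensionality _ _ tT).
rewrite (functional_extensionality _ _ tL) conv_scalel conv_scaler.
by rewrite /GRing.sub_fun scalerBr.
Qed.

End Twist.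

Section CubeRootOfUnity.
Variable C : numClosedFieldType.
Local Notation w := (omega C).

Lemma omega_sqr : w ^+ 2 = - w - 1.
Proof.
have i2 : ('i : C) ^+ 2 = -1 by rewrite sqrCi.
have s3 : (sqrtC 3 : C) ^+ 2 = 3 by rewrite sqrtCK.
have nz2 : (2 : C) != 0 by rewrite pnatr_eq0.
by rewrite /omega; field: i2 s3.
Qed.

Lemma omega_prim : 3.-primitive_root w.
Proof.
have w3 : w ^+ 3 = 1 by rewrite exprS omega_sqr; ring: omega_sqr.
have w_neq1 : w != 1.
  apply/eqP => w1; have := omega_sqr; rewrite w1 expr1n => e.
  have /eqP : (3 : C) = 0 by rewrite (_ : 3 = 1 - (-1 - 1)); [rewrite -e subrr | ring].
  by rewrite pnatr_eq0.
apply/andP; split=> //; apply/forallP => -[[|[|[|//]]] //= _]; rewrite !unity_rootE.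
- by rewrite expr1 (negbTE w_neq1).
- apply/eqP/negbTE/eqP => w21; move/eqP: w_neq1; apply.
  by rewrite -[LHS]mul1r -w21 -exprSr w3.
- by rewrite w3 !eqxx.
Qed.

Lemma omega3 : w ^+ 3 = 1.
Proof. exact: prim_expr_order omega_prim. Qed.

Lemma omega_neq0 : w != 0.
Proof. by rewrite (prim_root_eq0 omega_prim). Qed.

Lemma omega_expr_eqmod a b : (a = b %[mod 3])%N -> w ^+ a = w ^+ b.
Proof. by move=> eq_ab; rewrite -(prim_expr_mod omega_prim) eq_ab (prim_expr_mod omega_prim). Qed.

Lemma omega_exprV k : w ^- k = w ^+ (2 * k).
Proof.
apply: (mulfI (expf_neq0 k omega_neq0)); rewrite mulfV ?expf_neq0 ?omega_neq0 //.
by rewrite -exprD (omega_expr_eqmod (b := 0)) ?expr0 //; lia.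
Qed.

End CubeRootOfUnity.

Ltac mx3_entrywise :=
  apply/matrixP; case=> [[|[|[|?]]] ?] //; case=> [[|[|[|?]]] ?] //;
  rewrite ?mxE ?big_ord_recr ?big_ord0 /= ?mxE /= ?big_ord_recr ?big_ord0 /= ?mxE /=.

Section Symmetry.
Variables (C : numClosedFieldType) (t5 t2 x QU QV QW PU PV PW : C).
Local Notation w := (omega C).
Local Notation S := (Smx C).
Local Notation V := (Vmx C).
Local Notation sigma A := (S^T *m A *m S).
Local Notation theta := (theta t5 t2 x).
Local Notation Theta := (Theta t5 t2 x).
Local Notation dTheta := (dTheta t5 t2 x).
Local Notation Lxi3 := (Lxi3 t5 t2 x QU QV QW PU PV PW).
Local Notation Lpol := (Lpol t5 t2 x QU QV QW PU PV PW).

Lemma Smx_orthogonal : S *m S^T = 1%:M.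
Proof. by rewrite /Smx /mx3; mx3_entrywise; rewrite ?mulr0 ?mulr1 ?addr0 ?add0r. Qed.

Lemma sigma_diag_geom (u a : C) : u ^+ 3 = 1 ->
  u *: sigma (diag_mx (\row_(i < 3) (u ^+ i * a))) = diag_mx (\row_(i < 3) (u ^+ i * a)).
Proof.
move=> u3; rewrite /Smx /mx3; mx3_entrywise.
all: rewrite ?mulr0n ?mulr1n ?mul0r ?mulr0 ?addr0 ?add0r ?mul1r ?mulr1 //.
all: ring: u3.
Qed.

Lemma coef_theta (i : 'I_3) n : (theta i)`_n = w ^+ (i * n) * (theta 0)`_n.
Proof.
have pick a c : w ^+ (i * n) * (a * (n == c)%:R) = w ^+ (i * c) * a * (n == c)%:R.
  by case: eqP => [->|_]; rewrite ?mulr0 ?mulr1.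
have e7 : w ^+ (i * 7) = w ^+ i by apply: omega_expr_eqmod; lia.
have e5 : w ^+ (i * 5) = w ^+ (2 * i) by apply: omega_expr_eqmod; lia.
rewrite /Defs.theta !coefD !coefZ !coefXn coefX !mulrDr !pick /= expr0 invr1 omega_exprV.
by rewrite e7 e5 mulnC muln1; ring.
Qed.

Lemma coef_theta_eq0 i n : (7 < n)%N -> (theta i)`_n = 0.
Proof.
move=> lt7n; have ne c : (c < n)%N -> (n == c) = false by move=> ?; apply/eqP; lia.
rewrite /Defs.theta !coefD !coefZ !coefXn coefX.
by rewrite !ne /= ?mulr0 ?addr0 //; lia.
Qed.

Lemma mcoef_Theta n :
  mcoef Theta n = diag_mx (\row_(i < 3) ((w ^+ n) ^+ i * (theta 0)`_n)).
Proof. by apply/matrixP => i j; rewrite !mxE coefMn coef_theta -exprM mulnC. Qed.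

Lemma mcoef_dTheta m :
  mcoef dTheta m = diag_mx (\row_(i < 3) ((w ^+ m.+1) ^+ i * (theta 0)^`()`_m)).
Proof.
apply/matrixP => i j; rewrite !mxE derivMn coefMn !coef_deriv coef_theta -exprM mulnC.
by rewrite mulrnAr.
Qed.

Lemma mcoef_dTheta_eq0 m : (6 < m)%N -> mcoef dTheta m = 0.
Proof.
move=> lt6m; rewrite mcoef_dTheta coef_deriv coef_theta_eq0 // mul0rn.
by apply/matrixP => i j; rewrite !mxE mulr0 mul0rn.
Qed.

Lemma mcoef_dTheta_lead i j : i != j -> mcoef dTheta 6 i i != mcoef dTheta 6 j j.
Proof.
move=> ne_ij; rewrite mcoef_dTheta !mxE !eqxx !mulr1n coef_deriv.
have nz : (theta 0)`_7 *+ 7 != 0.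
  rewrite /Defs.theta !coefD !coefZ !coefXn coefX /= expr0 !mulr0 !addr0 mulr1.
  have nz7 : (7 : C) != 0 by rewrite pnatr_eq0.
  by rewrite mulr1 (_ : 3 / 7 *+ 7 = 3) ?pnatr_eq0 // -mulr_natr; field.
rewrite (inj_eq (mulIf nz)) -!exprM (eq_prim_root_expr (omega_prim C)).
by apply: contra ne_ij => /eqP h; apply/eqP/val_inj; move: (ltn_ord i) (ltn_ord j) h => /=; lia.
Qed.

Lemma Theta_coef_sym n : w ^+ n *: sigma (mcoef Theta n) = mcoef Theta n.
Proof. by rewrite mcoef_Theta sigma_diag_geom // -exprM mulnC exprM omega3 expr1n. Qed.

Lemma dTheta_coef_sym m : w ^+ m.+1 *: sigma (mcoef dTheta m) = mcoef dTheta m.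
Proof. by rewrite mcoef_dTheta sigma_diag_geom // -exprM mulnC exprM omega3 expr1n. Qed.

Lemma size_le_msize (A : 'M[{poly C}]_3) i j : (size (A i j) <= msize A)%N.
Proof.
apply: leq_trans (leq_bigmax_cond _ isT) (leq_bigmax_cond i isT).
Qed.

Lemma mcoef_eq0 (A : 'M[{poly C}]_3) m : (msize A <= m)%N -> mcoef A m = 0.
Proof.
by move=> le_Am; apply/matrixP => i j; rewrite !mxE nth_default ?(leq_trans (size_le_msize A i j)).
Qed.

Lemma mx_eval_mcoef (A : 'M[{poly C}]_3) xi :
  mx_eval A xi = \sum_(n < msize A) xi ^+ n *: mcoef A n.
Proof.
apply/matrixP => i j; rewrite summxE !mxE (horner_coef_wide _ (size_le_msize A i j)).
by apply: eq_bigr => n _; rewrite !mxE mulrC.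
Qed.

Lemma Theta_eval_sym xi : sigma (mx_eval Theta (w * xi)) = mx_eval Theta xi.
Proof.
rewrite !mx_eval_mcoef mulmx_sumr mulmx_suml; apply: eq_bigr => n _.
by rewrite -scalemxAr -scalemxAl exprMn mulrC -scalerA Theta_coef_sym.
Qed.

Definition omega_diag k : 'M[C]_3 := diag_mx (\row_(i < 3) w ^+ (k * i)).

Lemma Vmx_Smx : V *m S = w ^+ 2 *: (omega_diag 1 *m V).
Proof.
rewrite /Vmx /Smx /omega_diag /mx3; have w2 := omega_sqr C; mx3_entrywise.
all: ring: w2.
Qed.

Lemma Vmx_trSmx : V *m S^T = w *: (omega_diag 2 *m V).
Proof.
rewrite /Vmx /Smx /omega_diag /mx3; have w2 := omega_sqr C; mx3_entrywise.
all: ring: w2.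
Qed.

Lemma Vmx_unit : V \in unitmx.
Proof.
pose W := 3^-1 *: mx3 1 1 1 (w ^+ 2) 1 w w 1 (w ^+ 2).
have nz3 : (3 : C) != 0 by rewrite pnatr_eq0.
have w2 := omega_sqr C.
have WV : W *m V = 1%:M by rewrite /W /Vmx /mx3; mx3_entrywise; field: w2.
by case: (mulmx1_unit WV).
Qed.

Lemma sigma_conjV X :
  sigma (invmx V *m X *m V) = invmx V *m (omega_diag 2 *m X *m omega_diag 1) *m V.
Proof.
have trS_invV : S^T *m invmx V = w *: (invmx V *m omega_diag 2).
  rewrite -[S^T]mul1mx -(mulVmx Vmx_unit) -[invmx V *m V *m S^T]mulmxA Vmx_trSmx.
  by rewrite -scalemxAr -scalemxAl -!mulmxA mulmxV ?Vmx_unit // mulmx1 scalemxAr.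
rewrite !mulmxA trS_invV -[_ *m V *m S]mulmxA Vmx_Smx -scalemxAr -!scalemxAl scalerA.
by rewrite -exprSr omega3 scale1r !mulmxA.
Qed.

(* L(xi^3) is a polynomial in xi^3. *)
Lemma coef_Lxi3_sym i j k : w ^+ k * (Lxi3 i j)`_k = (Lxi3 i j)`_k.
Proof.
have pick (a : C) c : w ^+ k * (a * (k == c)%:R) = w ^+ c * a * (k == c)%:R.
  by case: eqP => [->|_]; rewrite ?mulr0 ?mulr1.
have coefXnC n (c : C) : ('X^n * c%:P)`_k = c * (k == n)%:R by rewrite mulrC coefCM coefXn.
have coefC0 (c : C) : c%:P`_k = c * (k == 0)%:R by rewrite coefC; case: eqP; rewrite ?mulr1 ?mulr0.
have w6 : w ^+ 6 = 1 by rewrite (@omega_expr_eqmod C 6 0).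
rewrite /Defs.Lxi3 /cmx !mxE !coefD !coefXnC coefC0 !mulrDr !pick.
by rewrite w6 omega3 expr0 !mul1r.
Qed.

Lemma mcoef_BLxi3C m i j :
  mcoef (Bmx C *m Lxi3 *m Cmx C) m i j = ('X^(i + (2 - j)) * Lxi3 i j)`_m.
Proof.
by rewrite /Bmx /Cmx mul_diag_mx mul_mx_diag !mxE mulrC mulrA -exprD addnC.
Qed.

Lemma mcoef_cmxl (A : 'M[C]_3) (P : 'M[{poly C}]_3) m :
  mcoef (cmx A *m P) m = A *m mcoef P m.
Proof.
apply/matrixP => i j; rewrite !mxE coef_sum; apply: eq_bigr => k _.
by rewrite !mxE coefCM.
Qed.

Lemma mcoef_cmxr (A : 'M[C]_3) (P : 'M[{poly C}]_3) m :
  mcoef (P *m cmx A) m = mcoef P m *m A.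
Proof.
apply/matrixP => i j; rewrite !mxE coef_sum; apply: eq_bigr => k _.
by rewrite !mxE coefMC.
Qed.

Lemma mcoef_Lpol m :
  mcoef Lpol m = 3 *: (invmx V *m mcoef (Bmx C *m Lxi3 *m Cmx C) m *m V).
Proof.
have -> : mcoef Lpol m = 3 *: mcoef (cmx (invmx V) *m Bmx C *m Lxi3 *m Cmx C *m cmx V) m.
  by apply/matrixP => i j; rewrite !mxE mulr_natl coefMn mulr_natl.
by rewrite mcoef_cmxr -!mulmxA mcoef_cmxl !mulmxA.
Qed.

Lemma Lpol_coef_sym m : w ^+ m.+1 *: sigma (mcoef Lpol m) = mcoef Lpol m.
Proof.
rewrite mcoef_Lpol -scalemxAr -scalemxAl sigma_conjV scalerA mulrC -scalerA.
congr (_ *: _); rewrite scalemxAl scalemxAr; congr (_ *m _ *m _).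
have := mcoef_BLxi3C m; move: (mcoef _ m) => K KE.
apply/matrixP => i j; rewrite /omega_diag mul_diag_mx mul_mx_diag !mxE KE coefXnM.
case: ltnP => le_m; first by rewrite !(mulr0, mul0r).
rewrite -[in RHS]coef_Lxi3_sym !mulrA mulrAC -!exprD; congr (_ * _).
by apply: omega_expr_eqmod; move: (ltn_ord i) (ltn_ord j) le_m; lia.
Qed.

Lemma Lres_sym : sigma (Lres C) = Lres C.
Proof.
rewrite /Lres mulmxN mulNmx sigma_conjV; congr (- (_ *m _ *m _)).
apply/matrixP => i j; rewrite /omega_diag /Emx mul_diag_mx mul_mx_diag !mxE.
have [<-|_] := eqVneq i j; last by rewrite !mulr0n !(mulr0, mul0r).
rewrite mulrAC -exprD (@omega_expr_eqmod C _ 0) ?mul1r //; lia.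
Qed.

End Symmetry.

Section Reindexing.
Variable C : numClosedFieldType.
Local Notation M := 'M[C]_3.

Lemma coefZ_sub (Y : nat -> M) a b :
  Defs.coefZ Y (a%:Z - b%:Z) = if (b <= a)%N then Y (a - b)%N else 0.
Proof.
case: leqP => le_ba; first by rewrite subzn.
by rewrite (_ : a%:Z - b%:Z = Negz (b - a).-1) //; lia.
Qed.

Lemma sum_pick (B c : nat) (b : bool) (f : nat -> M) :
  \sum_(j < B) (if (j == c :> nat) && b then f j else 0) = if (c < B)%N && b then f c else 0.
Proof. by rewrite -big_mkcond (eq_bigl _ _ (fun j => andbC _ _)) big_ord1_cond_eq. Qed.

Lemma sum_coefZ (op : M -> M -> M) (Y G : nat -> M) N K n :
    (forall g, op 0 g = 0) -> (forall y, op y 0 = 0) -> (N <= K.+1)%N ->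
    (forall m, (N <= m)%N -> G m = 0) ->
  \sum_(m < N) op (Defs.coefZ Y (m%:Z - (K%:Z - n%:Z))) (G m)
  = \sum_(i < n.+1) op (Y i) (rev_at K G (n - i)).
Proof.
move=> op0l op0r le_NK G0.
pose F (m i : nat) := if (i + K == m + n)%N then op (Y i) (G m) else 0.
transitivity (\sum_(m < K.+1) \sum_(i < n.+1) F m i).
  rewrite (big_ord_widen _ (fun m => op (Defs.coefZ Y (m%:Z - (K%:Z - n%:Z))) (G m)) le_NK).
  rewrite big_mkcond; apply: eq_bigr => m _.
  case: ltnP => [_|le_Nm]; last by rewrite big1 // => i _; rewrite /F G0 ?op0r ?if_same.
  rewrite (_ : m%:Z - _ = (m + n)%N%:Z - K%:Z); last by lia.
  rewrite (eq_bigr (fun i : 'I_n.+1 =>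
    if (nat_of_ord i == m + n - K)%N && (K <= m + n)%N then op (Y i) (G m) else 0)).
    rewrite (@sum_pick _ _ _ (fun i => op (Y i) (G m))) coefZ_sub.
    have := ltn_ord m; case: (leqP K (m + n)) => le_Kmn lt_mK; rewrite ?op0l ?andbF //.
    by rewrite ifT //; lia.
  by move=> i _; rewrite /F; congr (if _ then _ else _); apply/eqP/andP; lia.
rewrite exchange_big; apply: eq_bigr => i _ /=.
rewrite (eq_bigr (fun m : 'I_K.+1 =>
  if (nat_of_ord m == i + K - n)%N && (n <= i + K)%N then op (Y i) (G m) else 0)).
  rewrite (@sum_pick _ _ _ (fun m => op (Y i) (G m))) /rev_at.
  have := ltn_ord i; case: (leqP n (i + K)) => le_n_iK lt_in; rewrite ?andbF.
    by rewrite !ifT //; try congr (op _ (G _)); lia.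
  by rewrite ifF ?op0r //; lia.
by move=> m _; rewrite /F; congr (if _ then _ else _); apply/eqP/andP; lia.
Qed.

Lemma sum_coefZ_cons (op : M -> M -> M) (Y G : nat -> M) c N K n :
    (forall g, op 0 g = 0) -> (forall y, op y 0 = 0) -> (N <= K.+1)%N ->
    (forall m, (N <= m)%N -> G m = 0) ->
  \sum_(m < N) op (Defs.coefZ Y (m%:Z - (K%:Z - n%:Z))) (G m)
    + op (Defs.coefZ Y (- 1 - (K%:Z - n%:Z))) c
  = \sum_(i < n.+1) op (Y i) (rev_at K.+1 (cons_series c G) (n - i)).
Proof.
move=> op0l op0r le_NK G0.
rewrite -(@sum_coefZ op Y (cons_series c G) N.+1) // => [|[|m]] //=; last exact: G0.
have SK (k : nat) : k.+1%:Z = k%:Z + 1 by rewrite -addn1 PoszD.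
rewrite big_ord_recl addrC /=; congr (op (Defs.coefZ Y _) _ + _).
  by rewrite SK; ring.
by apply: eq_bigr => m _; rewrite /bump leq0n add1n add0n SK; congr (op (Defs.coefZ Y _) _); ring.
Qed.

End Reindexing.

Section FormalSolution.
Variables (C : numClosedFieldType) (t5 t2 x QU QV QW PU PV PW : C).
Local Notation dTheta := (dTheta t5 t2 x).
Local Notation Lpol := (Lpol t5 t2 x QU QV QW PU PV PW).

(* Any K >= 6 bounding the degrees of Theta' and Lpol would do. *)
Definition sol_order := (msize dTheta + msize Lpol + 6)%N.
Local Notation K := sol_order.
Local Notation S := (Smx C).
Local Notation w := (omega C).
(* The coefficients of z^K Theta' and z^K curly-L, obtained by reversing those
   of the polynomials xi Theta' and xi curly-L = Lres + xi Lpol. *)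
Definition dTheta_rev := rev_at K.+1 (cons_series 0 (mcoef dTheta)).
Definition Lcal_rev := rev_at K.+1 (cons_series (Lres C) (mcoef Lpol)).

Lemma formal_solution_is_sol Phi :
  formal_solution t5 t2 x QU QV QW PU PV PW Phi -> is_sol K dTheta_rev Lcal_rev Phi.
Proof.
move=> [_ fs]; apply: functional_extensionality => n.
have le_dTheta : (msize dTheta <= K.+1)%N by rewrite /sol_order; lia.
have le_Lpol : (msize Lpol <= K.+1)%N by rewrite /sol_order; lia.
have eT : \sum_(m < msize dTheta) Defs.coefZ Phi (m%:Z - (K%:Z - n%:Z)) *m mcoef dTheta m
          = \sum_(i < n.+1) Phi i *m dTheta_rev (n - i).
  rewrite -(@sum_coefZ_cons _ mulmx Phi (mcoef dTheta) 0 (msize dTheta)) ?mulmx0 ?addr0 //.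
  - exact: mul0mx.
  - exact: mulmx0.
  - exact: mcoef_eq0.
have eL : \sum_(m < msize Lpol) mcoef Lpol m *m Defs.coefZ Phi (m%:Z - (K%:Z - n%:Z))
          + Lres C *m Defs.coefZ Phi (-1 - (K%:Z - n%:Z))
          = \sum_(i < n.+1) Lcal_rev (n - i) *m Phi i.
  rewrite (@sum_coefZ_cons _ (fun y g => g *m y) Phi (mcoef Lpol) (Lres C) (msize Lpol)) //.
  - exact: mulmx0.
  - exact: mul0mx.
  - exact: mcoef_eq0.
have eE : (K%:Z - n%:Z + 1)%:~R *: Defs.coefZ Phi (- (K%:Z - n%:Z) - 1)
          = - euler_shift K.+1 Phi n.
  rewrite euler_shiftE (_ : - _ - 1 = n%:Z - K.+1%:Z); last by lia.
  rewrite coefZ_sub; case: ifP => le_Kn; last by rewrite scaler0 oppr0.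
  rewrite (_ : _ + 1 = - (n - K.+1)%N%:Z); last by lia.
  by rewrite mulrNz scaleNr -pmulrn scaler_nat.
have := fs (K%:Z - n%:Z); rewrite eT eL eE => hE.
rewrite /GRing.sub_fun [conv Lcal_rev Phi n]conv_rev /conv !mulmxE in hE *.
by rewrite -hE opprD opprK addrC subrK.
Qed.

Lemma dTheta_rev_diag q : is_diag_mx (dTheta_rev q).
Proof.
rewrite /dTheta_rev /rev_at; case: ifP => _; last exact: mx0_is_diag.
case: (K.+1 - q)%N => [|m] /=; first exact: mx0_is_diag.
by rewrite mcoef_dTheta diag_mx_is_diag.
Qed.

Lemma dTheta_rev_lt q : (q < K - 6)%N -> dTheta_rev q = 0.
Proof.
move=> lt_q; rewrite /dTheta_rev /rev_at ifT; last by lia.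
rewrite (_ : (K.+1 - q = (K - q).+1)%N) /=; last by lia.
by rewrite mcoef_dTheta_eq0 //; lia.
Qed.

Lemma dTheta_rev_lead i j :
  i != j -> dTheta_rev (K - 6) i i != dTheta_rev (K - 6) j j.
Proof.
rewrite /dTheta_rev /rev_at ifT; last by lia.
by rewrite (_ : (K.+1 - (K - 6) = 7)%N); [exact: mcoef_dTheta_lead | rewrite /sol_order; lia].
Qed.

Lemma twist_dTheta_rev q : twist S w dTheta_rev q = w ^- K.+1 *: dTheta_rev q.
Proof.
apply: (twist_rev_at (omega_neq0 C)); apply: cons_series_sym (dTheta_coef_sym _ _ _).
by rewrite mulmx0 mul0mx.
Qed.

Lemma twist_Lcal_rev q : twist S w Lcal_rev q = w ^- K.+1 *: Lcal_rev q.
Proof.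
apply: (twist_rev_at (omega_neq0 C)).
exact: cons_series_sym (Lres_sym C) (Lpol_coef_sym _ _ _ _ _ _ _ _ _).
Qed.

Lemma formal_solution_twist Phi :
  formal_solution t5 t2 x QU QV QW PU PV PW Phi -> twist S w Phi = Phi.
Proof.
move=> fs; have sol := formal_solution_is_sol fs.
have Phi0 : Phi 0%N = 1 by case: fs.
symmetry; apply: (sol_unique (leq_subr 6 K) dTheta_rev_diag dTheta_rev_lt dTheta_rev_lead sol).
- apply: (twist_sol (Smx_orthogonal C) (omega_neq0 C)) sol.
  + exact: twist_dTheta_rev.
  + exact: twist_Lcal_rev.
- exact: Phi0.
- by rewrite /twist expr0 invr1 scale1r Phi0 mulmx1 mulmx1C ?Smx_orthogonal.
Qed.

End FormalSolution.

Theorem mainTheorem8 (C : numClosedFieldType)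
    (t5 t2 x QU QV QW PU PV PW : C) (Phi : nat -> 'M[C]_3) :
  formal_solution t5 t2 x QU QV QW PU PV PW Phi ->
  (forall xi : C,
      (Smx C)^T *m mx_eval (Theta t5 t2 x) (omega C * xi) *m Smx C
      = mx_eval (Theta t5 t2 x) xi) /\
  (forall k : nat, Phi k = omega C ^- k *: ((Smx C)^T *m Phi k *m Smx C)).
Proof.
move=> fs; split=> [xi|k]; first exact: Theta_eval_sym.
by rewrite -{1}(formal_solution_twist fs).
Qed.
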